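(* Let $G=(\mathcal{V},\mathcal{D})$ be an undirected graph with $\mathcal{V}=\{1,\dots,n\}$, and let $M_G$ be the latent conditional model associated with $G$ as described in the context, with $\alpha=\sum_{v\in\mathcal{V}}2^{\deg(v)}$. If a labeling $\mathbf{y}\in\{E,N\}^n$ satisfies $P(\mathbf{y})=c/\alpha$ for some integer $c\geq 1$, then $G$ has a clique of size at least $c$ (i.e., the maximum clique of $G$ has size at least $c$).
   Context: The model $M_G$: sequence length $m=n=|\mathcal{V}|$; label set $\mathcal{Y}=\{E,N\}$; latent variables $\mathcal{H}(E)=\{E^1,\dots,E^n\}$, $\mathcal{H}(N)=\{N^1,\dots,N^n\}$, $\mathcal{H}=\mathcal{H}(E)\cup\mathcal{H}(N)$. For each $i\in\mathcal{V}$ the layer $L_i$ is the set of latent-labelings $\mathbf{h}=(h_1,\dots,h_n)$ such that $h_k\in\{E^i,N^i\}$ for all $k$, $h_i=E^i$, and for $k\neq i$, $h_k=E^i$ is allowed only if $\{k,i\}\in\mathcal{D}$ (if $\{k,i\}\in\mathcal{D}$ both $E^i$ and $N^i$ are allowed at position $k$; otherwise only $N^i$). A latent-labeling is valid if it lies in some layer $L_i$; there are exactly $\alpha=\sum_{v\in\mathcal{V}}2^{\deg(v)}$ valid latent-labelings. The node and edge scores of $M_G$ are chosen so that $P(\mathbf{h})=1/\alpha$ for every valid latent-labeling and $P(\mathbf{h})=0$ otherwise. The probability of a labeling $\mathbf{y}\in\{E,N\}^n$ is $P(\mathbf{y})=\sum_{\mathbf{h}:\,h_j\in\mathcal{H}(y_j)\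 \forall j}P(\mathbf{h})$. Here $\deg(v)$ is the degree of $v$ in $G$. *)

From mathcomp Require Import all_boot all_order all_algebra.
Set Implicit Arguments. Unset Strict Implicit. Unset Printing Implicit Defensive.
Import Order.TTheory GRing.Theory Num.Theory.
Local Open Scope ring_scope.

(* Graph G = (V, D) on V = 'I_n (0-based version of {1..n}), given by a
   symmetric irreflexive adjacency relation [adj]. *)
Definition simple_graph (n : nat) (adj : rel 'I_n) : Prop :=
  symmetric adj /\ irreflexive adj.

Definition deg (n : nat) (adj : rel 'I_n) (v : 'I_n) : nat :=
  #|[set u | adj v u]|.

Definition alpha (n : nat) (adj : rel 'I_n) : nat :=
  (\sum_(v < n) 2 ^ deg adj v)%N.

(* Labels: E is encoded by [true], N by [false].
   A labeling y in {E,N}^n is a {ffun 'I_n -> bool}. *)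
Notation labeling n := {ffun 'I_n -> bool}.

(* Latent variables: E^i is (i, true), N^i is (i, false).
   H(E) = {(i,true)}, H(N) = {(i,false)}.
   A latent labeling is h : {ffun 'I_n -> 'I_n * bool}. *)
Notation latent_labeling n := {ffun 'I_n -> 'I_n * bool}.

Definition in_layer (n : nat) (adj : rel 'I_n) (i : 'I_n)
    (h : latent_labeling n) : bool :=
  [forall k, (h k).1 == i] && (h i == (i, true)) &&
  [forall k, (k != i) && (h k).2 ==> adj k i].

Definition valid (n : nat) (adj : rel 'I_n) (h : latent_labeling n) : bool :=
  [exists i, in_layer adj i h].

Definition Ph (R : numFieldType) (n : nat) (adj : rel 'I_n)
    (h : latent_labeling n) : R :=
  if valid adj h then (alpha adj)%:R^-1 else 0.

Definition compatible (n : nat) (y : labeling n) (h : latent_labeling n) : bool :=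
  [forall j, (h j).2 == y j].

Definition Py (R : numFieldType) (n : nat) (adj : rel 'I_n) (y : labeling n) : R :=
  \sum_(h : latent_labeling n | compatible y h) Ph R adj h.

Definition is_clique (n : nat) (adj : rel 'I_n) (S : {set 'I_n}) : bool :=
  [forall u in S, forall v in S, (u != v) ==> adj u v].

From mathcomp Require Import all_boot all_order all_algebra.
Import Order.TTheory GRing.Theory Num.Theory.
Local Open Scope ring_scope.

(* A layer L_i contains at most one latent labeling compatible with y, namely
   k |-> (i, y k), and it does exactly when y i = E and every other vertex
   labelled E is adjacent to i.  Hence alpha P(y) counts these layers i, and
   any two of them are adjacent: they form a clique of size alpha P(y). *)

Section CompatibleLayers.

Context {n : nat} (adj : rel 'I_n) (y : labeling n).

Definition compatible_layers : {set 'I_n} :=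
  [set i | y i && [forall k, (k != i) && y k ==> adj k i]].

Definition layer_witness (i : 'I_n) : latent_labeling n := [ffun k => (i, y k)].

Lemma layer_witness_inj : injective layer_witness.
Proof. by move=> i j /ffunP /(_ i); rewrite !ffunE => -[]. Qed.

Lemma compatible_validE :
  [set h | compatible y h && valid adj h] = layer_witness @: compatible_layers.
Proof.
apply/setP => h; rewrite inE; apply/andP/imsetP.
- move=> [/forallP hy /existsP [i /andP [/andP [/forallP h1 /eqP hi] hE]]].
  have -> : h = layer_witness i.
    apply/ffunP => k; rewrite ffunE.
    by case: (h k) (h1 k) (hy k) => a b /= /eqP -> /eqP ->.
  exists i => //; rewrite inE; apply/andP; split.
  + by have := hy i; rewrite hi => /eqP <-.
  + by apply/forallP => k; move: (h1 k) (hy k) (forallP hE k) => /eqP <- /eqP <-.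
- move=> [i]; rewrite inE => /andP [yi /forallP hT] ->; split.
    by apply/forallP => k; rewrite ffunE.
  apply/existsP; exists i; apply/andP; split; [apply/andP; split|].
  + by apply/forallP => k; rewrite ffunE.
  + by rewrite ffunE yi.
  + by apply/forallP => k; rewrite ffunE; exact: hT.
Qed.

Lemma Py_compatible_layers (R : numFieldType) :
  Py R adj y = #|compatible_layers|%:R / (alpha adj)%:R.
Proof.
rewrite /Py /Ph -big_mkcondr /= -(card_imset _ layer_witness_inj).
by rewrite -compatible_validE sumr_const cardsE mulr_natl.
Qed.

Lemma compatible_layers_clique : is_clique adj compatible_layers.
Proof.
apply/forallP => u; apply/implyP; rewrite inE => /andP [yu _].
apply/forallP => v; apply/implyP; rewrite inE => /andP [_ /forallP hv].
by apply/implyP => uv; have := hv u; rewrite uv yu.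
Qed.

End CompatibleLayers.

Lemma alpha_gt0 {n : nat} (adj : rel 'I_n) : (0 < n)%N -> (0 < alpha adj)%N.
Proof. by move=> hn; rewrite /alpha (bigD1 (Ordinal hn)) //= addn_gt0 expn_gt0. Qed.

Lemma natr_div_inj {R : numFieldType} {a m k : nat} :
  (0 < a)%N -> m%:R / a%:R = k%:R / a%:R :> R -> m = k.
Proof.
move=> a_gt0 /mulIf; rewrite invr_eq0 pnatr_eq0 -lt0n a_gt0 => /(_ isT).
by move/eqP; rewrite eqr_nat => /eqP.
Qed.

Theorem lemma1 (R : realFieldType) (n : nat) (adj : rel 'I_n)
  (hG : simple_graph adj) (hn : (0 < n)%N)
  (y : labeling n) (c : nat) (hc : (1 <= c)%N)
  (hP : Py R adj y = c%:R / (alpha adj)%:R) :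
  exists S : {set 'I_n}, is_clique adj S && (c <= #|S|)%N.
Proof.
exists (compatible_layers adj y); rewrite compatible_layers_clique /=.
rewrite Py_compatible_layers in hP.
by rewrite (natr_div_inj (alpha_gt0 adj hn) hP).
Qed.
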